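(* Let $k$ be a field of characteristic $p>0$ with algebraic closure $\overline k$. Let $$\sigma(x)=\sum_{i=d}^{\infty}\alpha_i x^i\in\overline k((x)),$$ with $d\in\mathbb Z$ and $\alpha_i\in\overline k$ for all $i$, and let $L=k(\{\alpha_i\})\subset\overline k$ be the field generated over $k$ by the coefficients of $\sigma$. Assume $L$ is purely inseparable over $k$. Then $\sigma(x)$ is algebraic over $k((x))$ if and only if there exists $n\in\mathbb N$ such that $L^{p^n}\subset k$.
   Context: For a field $L$ of characteristic $p>0$ and $n\in\mathbb N$, $L^{p^n}=\{f^{p^n}\mid f\in L\}$. $\overline k((x))$ denotes the field of formal Laurent series in $x$ with coefficients in $\overline k$. *)

From HB Require Import structures.
From mathcomp Require Import all_boot all_order all_algebra.
Set Implicit Arguments. Unset Strict Implicit. Unset Printing Implicit Defensive.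
Import Order.TTheory GRing.Theory Num.Theory.
Local Open Scope ring_scope.

Definition is_subfield (K : fieldType) (S : {pred K}) : Prop :=
  [/\ 1 \in S,
      forall x y, x \in S -> y \in S -> x - y \in S,
      forall x y, x \in S -> y \in S -> x * y \in S &
      forall x, x \in S -> x^-1 \in S].

Definition in_gen_field (K : fieldType) (k : {pred K}) (alpha : int -> K) (y : K) : Prop :=
  forall S : {pred K}, is_subfield S -> {subset k <= S} ->
    (forall i, alpha i \in S) -> y \in S.

Definition algebraic_over (K : fieldType) (k : {pred K}) (x : K) : Prop :=
  exists q : {poly K}, [/\ q != 0, (forall i, q`_i \in k) & root q x].

(* Formal Laurent series over R:  a pair (d, a) represents
   x^d * sum_{n>=0} a n x^n. *)
Definition lser (R : Type) : Type := (int * (nat -> R))%type.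

Section Laurent.
Variable R : nzRingType.

Definition lcoef (s : lser R) (i : int) : R :=
  if (s.1 <= i)%R then s.2 `|i - s.1|%N else 0.

Definition lzero : lser R := (0%R, fun _ => 0).
Definition lone : lser R := (0%R, fun n => if n == 0%N then 1 else 0).

Definition ladd (s t : lser R) : lser R :=
  let m := Order.min s.1 t.1 in
  (m, fun n => lcoef s (m + n%:Z) + lcoef t (m + n%:Z)).

Definition lmul (s t : lser R) : lser R :=
  (s.1 + t.1, fun n => \sum_(i < n.+1) s.2 i * t.2 (n - i)%N).

Definition lexp (s : lser R) (j : nat) : lser R := iter j (lmul s) lone.

Definition lser_eq0 (s : lser R) : Prop := forall i, lcoef s i = 0.

Definition lpoly_eval (cs : seq (lser R)) (sigma : lser R) : lser R :=
  foldr ladd lzero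
    [seq lmul (nth lzero cs j) (lexp sigma j) | j <- iota 0 (size cs)].

Definition lser_over (k : {pred R}) (s : lser R) : Prop :=
  forall i, lcoef s i \in k.

Definition lser_algebraic (k : {pred R}) (sigma : lser R) : Prop :=
  exists cs : seq (lser R),
    [/\ forall j, lser_over k (nth lzero cs j),
        exists j, ~ lser_eq0 (nth lzero cs j) &
        lser_eq0 (lpoly_eval cs sigma)].
End Laurent.

From HB Require Import structures.
From mathcomp Require Import all_boot all_order all_algebra zify.
From mathcomp Require boolp.
Import Order.TTheory GRing.Theory Num.Theory.
Local Open Scope ring_scope.
Set Implicit Arguments. Unset Strict Implicit. Unset Printing Implicit Defensive.

(* "If": when alpha_i^(p^n) lies in k for all i, additivity of Frobenius gives
   sigma^(p^n) = sum alpha_i^(p^n) x^(i p^n) in k((x)), so sigma is a root of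
   Y^(p^n) - sigma^(p^n).
   "Only if": clearing the powers of x turns an algebraic equation for sigma
   into P(s) = 0 with 0 <> P in k[[x]][Y] and s = x^-d sigma in K[[x]].  By
   induction on the degree of P the coefficients of s admit a common exponent
   E with s_n^(p^E) in k:
   - if P' = 0 then P(Y) = R(Y^p) and induction applies to R and s^p;
   - if P'(s) = 0 then induction applies to P';
   - otherwise P'(s) has some order v, and the coefficient of x^(N+v) in P(s)
     expresses s_N rationally in s_0, ..., s_(N-1) for N > v (Hensel), so all
     s_N lie in the field of p^E-th roots of k once s_0, ..., s_v do.
   Since the p^E-th roots of elements of k form a subfield, it then contains L. *)

Record pser (R : Type) := PSer { pcoef : nat -> R }.

Lemma pser_ext R (a b : pser R) : pcoef a =1 pcoef b -> a = b.
Proof. by case: a b => f [g] /= /boolp.funext ->. Qed.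

HB.instance Definition _ R := boolp.gen_eqMixin (pser R).
HB.instance Definition _ R := boolp.gen_choiceMixin (pser R).

Section PserRing.
Variable R : comNzRingType.

Definition pser0 : pser R := PSer (fun _ => 0).
Definition pser1 : pser R := PSer (fun n => if n == 0%N then 1 else 0).
Definition pseradd (a b : pser R) : pser R := PSer (fun n => pcoef a n + pcoef b n).
Definition pseropp (a : pser R) : pser R := PSer (fun n => - pcoef a n).
Definition psermul (a b : pser R) : pser R :=
  PSer (fun n => \sum_(i < n.+1) pcoef a i * pcoef b (n - i)%N).

Lemma pseraddA : associative pseradd.
Proof. by move=> a b c; apply: pser_ext => n /=; rewrite addrA. Qed.
Lemma pseraddC : commutative pseradd.
Proof. by move=> a b; apply: pser_ext => n /=; rewrite addrC. Qed.
Lemma pseradd0 : left_id pser0 pseradd.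
Proof. by move=> a; apply: pser_ext => n /=; rewrite add0r. Qed.
Lemma pseraddN : left_inverse pser0 pseropp pseradd.
Proof. by move=> a; apply: pser_ext => n /=; rewrite addNr. Qed.

(* The coefficients of a product below N only depend on the factors below N,
   so they can be computed from any polynomials agreeing with them there; this
   transfers the ring laws from polynomials to power series. *)
Lemma psermul_poly N a b (u v : {poly R}) :
  (forall i, (i < N)%N -> u`_i = pcoef a i) ->
  (forall i, (i < N)%N -> v`_i = pcoef b i) ->
  forall n, (n < N)%N -> pcoef (psermul a b) n = (u * v)`_n.
Proof.
move=> ua vb n ltnN; rewrite coefM; apply: eq_bigr => i _.
have leni : (i <= n)%N by rewrite -ltnS.
by rewrite ua ?vb //; [exact: leq_ltn_trans (leq_subr i n) ltnN | exact: leq_ltn_trans leni ltnN].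
Qed.

Definition ptrunc N (a : pser R) : {poly R} := \poly_(i < N) pcoef a i.

Lemma coef_ptrunc N a i : (i < N)%N -> (ptrunc N a)`_i = pcoef a i.
Proof. by move=> ltiN; rewrite coef_poly ltiN. Qed.

Lemma psermulA : associative psermul.
Proof.
move=> a b c; apply: pser_ext => n; set N := n.+1.
have tab := psermul_poly (@coef_ptrunc N a) (@coef_ptrunc N b).
have tbc := psermul_poly (@coef_ptrunc N b) (@coef_ptrunc N c).
rewrite (@psermul_poly N _ _ (ptrunc N a) (ptrunc N b * ptrunc N c));
  [|exact: coef_ptrunc | by move=> i ltiN; rewrite tbc | exact: ltnSn].
rewrite (@psermul_poly N _ _ (ptrunc N a * ptrunc N b) (ptrunc N c)) ?mulrA //;
  [by move=> i ltiN; rewrite tab | exact: coef_ptrunc].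
Qed.

Lemma psermulC : commutative psermul.
Proof.
move=> a b; apply: pser_ext => n.
by rewrite (psermul_poly (@coef_ptrunc n.+1 a) (@coef_ptrunc n.+1 b)) //
  (psermul_poly (@coef_ptrunc n.+1 b) (@coef_ptrunc n.+1 a)) // mulrC.
Qed.

Lemma psermul1 : left_id pser1 psermul.
Proof.
move=> a; apply: pser_ext => n /=.
rewrite big_ord_recl /= mul1r subn0 big1 ?addr0 // => i _; exact: mul0r.
Qed.

Lemma psermulDl : left_distributive psermul pseradd.
Proof.
move=> a b c; apply: pser_ext => n /=; rewrite -big_split /=.
by apply: eq_bigr => i _; rewrite mulrDl.
Qed.

Lemma pser1_neq0 : pser1 != pser0.
Proof. by apply/eqP => /(congr1 (fun s : pser R => pcoef s 0%N)) /= /eqP; rewrite oner_eq0. Qed.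
End PserRing.

HB.instance Definition _ (R : comNzRingType) := GRing.isZmodule.Build (pser R)
  (@pseraddA R) (@pseraddC R) (@pseradd0 R) (@pseraddN R).
HB.instance Definition _ (R : comNzRingType) :=
  GRing.Zmodule_isComNzRing.Build (pser R)
  (@psermulA R) (@psermulC R) (@psermul1 R) (@psermulDl R) (@pser1_neq0 R).

Section PserCoef.
Variable R : comNzRingType.
Implicit Types a b s : pser R.

Lemma pcoefD a b n : pcoef (a + b) n = pcoef a n + pcoef b n. Proof. by []. Qed.
Lemma pcoefB a b n : pcoef (a - b) n = pcoef a n - pcoef b n. Proof. by []. Qed.
Lemma pcoef0 n : pcoef (0 : pser R) n = 0. Proof. by []. Qed.
Lemma pcoef1 n : pcoef (1 : pser R) n = if n == 0%N then 1 else 0. Proof. by []. Qed.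
Lemma pcoefM a b n : pcoef (a * b) n = \sum_(i < n.+1) pcoef a i * pcoef b (n - i)%N.
Proof. by []. Qed.

Lemma pcoef_sum I (r : seq I) (P : pred I) (F : I -> pser R) n :
  pcoef (\sum_(i <- r | P i) F i) n = \sum_(i <- r | P i) pcoef (F i) n.
Proof. by elim/big_rec2: _ => // i y1 y2 _ <-. Qed.

Lemma pcoefMn a m n : pcoef (a *+ m) n = pcoef a n *+ m.
Proof. by elim: m => [|m IH]; rewrite ?mulr0n // !mulrS pcoefD IH. Qed.

Definition vanishes_below N a := forall i, (i < N)%N -> pcoef a i = 0.

Lemma pcoefM_order a b A B : vanishes_below A a -> vanishes_below B b ->
  vanishes_below (A + B) (a * b) /\ pcoef (a * b) (A + B)%N = pcoef a A * pcoef b B.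
Proof.
move=> a0 b0; split=> [n ltnAB|].
  rewrite pcoefM big1 // => i _; have := ltn_ord i; rewrite ltnS => lein.
  case: (ltnP i A) => [ltiA|leAi]; first by rewrite a0 ?mul0r.
  by rewrite b0 ?mulr0 //; lia.
have ltA : (A < (A + B).+1)%N by rewrite ltnS leq_addr.
rewrite pcoefM (bigD1 (Ordinal ltA)) //= addKn big1 ?addr0 // => i neiA.
have := ltn_ord i; rewrite ltnS => leiAB.
have [ltiA|leAi] := ltnP i A; first by rewrite a0 ?mul0r.
have ltAi : (A < i)%N by rewrite ltn_neqAle leAi andbT eq_sym.
by rewrite b0 ?mulr0 //; lia.
Qed.

Lemma vanishes_below_mull N a b : vanishes_below N a -> vanishes_below N (a * b).
Proof.
move=> a0; have b0 : vanishes_below 0 b by [].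
by have [] := pcoefM_order a0 b0; rewrite addn0.
Qed.

Definition pmono (i : nat) (c : R) : pser R := PSer (fun m => if m == i then c else 0).

Lemma sum_ord_pred1 (F : nat -> R) N m :
  \sum_(i < N) (if m == (i : nat) then F i else 0) = if (m < N)%N then F m else 0.
Proof.
case: ltnP => [ltmN|leNm].
  rewrite (bigD1 (Ordinal ltmN)) //= eqxx big1 ?addr0 // => i nei.
  by rewrite ifN //; apply: contra nei => /eqP eim; apply/eqP/val_inj.
rewrite big1 // => i _; rewrite ifN //; apply/eqP => emi.
by move: (ltn_ord i); rewrite -emi ltnNge leNm.
Qed.

Lemma pmonoM i j x y : pmono i x * pmono j y = pmono (i + j)%N (x * y).
Proof.
have vi l c : vanishes_below l (pmono l c) by move=> m /ltn_eqF /= ->.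
have [_ top] := pcoefM_order (vi i x) (vi j y).
apply: pser_ext => m; have [->|nem] := eqVneq m (i + j)%N; first by rewrite top /= !eqxx.
rewrite pcoefM /= (negbTE nem) big1 // => l _ /=.
case: eqP => [eli|_]; last by rewrite mul0r.
case: eqP => [emj|_]; last by rewrite mulr0.
by case/eqP: nem; rewrite -emj eli subnKC // -eli -ltnS.
Qed.

Lemma pmonoX i x q : pmono i x ^+ q = pmono (i * q)%N (x ^+ q).
Proof.
elim: q => [|q IH]; first by rewrite muln0 !expr0; apply: pser_ext.
by rewrite !exprS IH pmonoM mulnS.
Qed.

Lemma pcoef_shift l b n :
  pcoef (pmono l 1 * b) n = if (l <= n)%N then pcoef b (n - l)%N else 0.
Proof.
rewrite pcoefM -ltnS -(sum_ord_pred1 (fun j => pcoef b (n - j)%N)).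
by apply: eq_bigr => i _ /=; rewrite eq_sym; case: eqP; rewrite ?mul1r ?mul0r.
Qed.

Lemma pchar_pser p : p \in [pchar R] -> p \in [pchar (pser R)].
Proof.
move=> charp; rewrite inE (pcharf_prime charp) /=; apply/eqP/pser_ext => n.
by rewrite pcoefMn pcoef0 pcoef1; case: eqP; rewrite ?mul0rn // (mulrn_pchar charp).
Qed.

Lemma pnat_pchar_exp (S : nzRingType) p E : p \in [pchar S] -> [pchar S].-nat (p ^ E)%N.
Proof. by move=> charp; rewrite pnatX (eq_pnat _ (pcharf_eq charp)) pnat_id ?(pcharf_prime charp). Qed.

Lemma expr_sum_pchar (S : comNzRingType) q I (r : seq I) (F : I -> S) :
  [pchar S].-nat q -> (\sum_(i <- r) F i) ^+ q = \sum_(i <- r) F i ^+ q.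
Proof.
move=> charq; elim: r => [|x r IH]; last by rewrite !big_cons exprDn_pchar // IH.
by rewrite !big_nil expr0n; case: q charq.
Qed.

Lemma pcoef_frob p E s n : p \in [pchar R] ->
  pcoef (s ^+ (p ^ E)%N) n =
  if (p ^ E %| n)%N then pcoef s (n %/ p ^ E)%N ^+ (p ^ E)%N else 0.
Proof.
move=> charp; set q := (p ^ E)%N.
have charq := pnat_pchar_exp E (pchar_pser charp).
have q_gt0 : (0 < q)%N by rewrite expn_gt0 prime_gt0 // (pcharf_prime charp).
pose t := \sum_(i < n.+1) pmono i (pcoef s i).
have t_n i : (i < n.+1)%N -> pcoef t i = pcoef s i.
  by move=> ltin; rewrite pcoef_sum /= (sum_ord_pred1 (pcoef s)) ltin.
have split_s : s = t + (s - t) by rewrite addrC subrK.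
rewrite {1}split_s exprDn_pchar // pcoefD.
have -> : pcoef ((s - t) ^+ q) n = 0.
  have st0 : vanishes_below n.+1 (s - t) by move=> i ltin; rewrite pcoefB t_n ?subrr.
  by rewrite -(prednK q_gt0) exprS (vanishes_below_mull _ st0).
rewrite addr0 expr_sum_pchar //.
under eq_bigr => i _ do rewrite pmonoX.
rewrite pcoef_sum /=; case: ifP => [/dvdnP[j ->]|ndvd].
  rewrite mulnK //; under eq_bigr => i _ do rewrite eqn_mul2r gtn_eqF //=.
  by rewrite (sum_ord_pred1 (fun i => pcoef s i ^+ q)) ltnS leq_pmulr.
rewrite big1 // => i _; rewrite ifN //; apply: contraFN ndvd => /eqP ->.
exact: dvdn_mull.
Qed.

Lemma taylor2 (S : comNzRingType) (P : {poly S}) t h :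
  exists Q, P.[t + h] = P.[t] + h * P^`().[t] + h ^+ 2 * Q.
Proof.
rewrite (@nderiv_taylor_wide _ (size P).+2 P t h (mulrC t h)); last by rewrite leqW.
rewrite big_ord_recl big_ord_recl /= nderivn0 nderivn1 expr0 mulr1 expr1.
exists (\sum_(i < size P) P^`N(i.+2).[t] * h ^+ i).
rewrite big_distrr addrA [h * _]mulrC; congr (_ + _); apply: eq_bigr => i _.
by rewrite /bump /= !add1n (exprD h 2 i) mulrCA.
Qed.

Lemma horner_perturb_low (P : {poly pser R}) t h N : vanishes_below N h ->
  forall j, (j < N)%N -> pcoef P.[t + h] j = pcoef P.[t] j.
Proof.
move=> h0 j ltjN; have [Q ->] := taylor2 P t h.
by rewrite expr2 -mulrA !pcoefD !(vanishes_below_mull _ h0) // !addr0.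
Qed.

Lemma horner_perturb_linear (P : {poly pser R}) t h N v :
  vanishes_below N h -> vanishes_below v P^`().[t] -> (v < N)%N ->
  pcoef P.[t + h] (N + v)%N = pcoef P.[t] (N + v)%N + pcoef h N * pcoef P^`().[t] v.
Proof.
move=> h0 d0 ltvN; have [Q ->] := taylor2 P t h.
have [_ lin] := pcoefM_order h0 d0.
have [hh0 _] := pcoefM_order h0 h0.
by rewrite !pcoefD lin expr2 (vanishes_below_mull _ hh0) ?addr0 // ltn_add2l.
Qed.
End PserCoef.

Section Subfield.
Variables (K : fieldType) (S : {pred K}) (hS : is_subfield S).

Lemma subfield1 : 1 \in S. Proof. by case: hS. Qed.
Lemma subfieldB x y : x \in S -> y \in S -> x - y \in S. Proof. by case: hS => _ + _ _; apply. Qed.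
Lemma subfieldM x y : x \in S -> y \in S -> x * y \in S. Proof. by case: hS => _ _ + _; apply. Qed.
Lemma subfieldV x : x \in S -> x^-1 \in S. Proof. by case: hS => _ _ _; apply. Qed.
Lemma subfield0 : 0 \in S. Proof. by rewrite -(subrr 1) subfieldB ?subfield1. Qed.
Lemma subfieldN x : x \in S -> - x \in S. Proof. by move=> Sx; rewrite -sub0r subfieldB ?subfield0. Qed.
Lemma subfieldD x y : x \in S -> y \in S -> x + y \in S.
Proof. by move=> Sx Sy; rewrite -(opprK y) subfieldB ?subfieldN. Qed.
Lemma subfieldX x n : x \in S -> x ^+ n \in S.
Proof. by move=> Sx; elim: n => [|n IH]; rewrite ?expr0 ?subfield1 // exprS subfieldM. Qed.
Lemma subfieldMn x n : x \in S -> x *+ n \in S.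
Proof. by move=> Sx; elim: n => [|n IH]; rewrite ?mulr0n ?subfield0 // mulrS subfieldD. Qed.
Lemma subfield_sum I (r : seq I) (F : I -> K) : (forall i, F i \in S) -> \sum_(i <- r) F i \in S.
Proof. by move=> SF; elim/big_ind: _ => //; [exact: subfield0 | exact: subfieldD]. Qed.

Definition pser_over (s : pser K) := forall n, pcoef s n \in S.

Lemma pser_over1 : pser_over 1.
Proof. by move=> n; rewrite pcoef1; case: eqP => _; [exact: subfield1 | exact: subfield0]. Qed.
Lemma pser_overD a b : pser_over a -> pser_over b -> pser_over (a + b).
Proof. by move=> Sa Sb n; rewrite pcoefD subfieldD. Qed.
Lemma pser_overM a b : pser_over a -> pser_over b -> pser_over (a * b).
Proof. by move=> Sa Sb n; rewrite pcoefM subfield_sum // => i; rewrite subfieldM. Qed.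
Lemma pser_overMn a m : pser_over a -> pser_over (a *+ m).
Proof. by move=> Sa n; rewrite pcoefMn subfieldMn. Qed.

Lemma pser_over_horner (P : {poly pser K}) t :
  (forall i, pser_over P`_i) -> pser_over t -> pser_over P.[t].
Proof.
move=> SP St; rewrite horner_coef.
elim/big_ind: _ => [n|a b|i _]; [exact: subfield0 | exact: pser_overD |].
apply: pser_overM => //; elim: (nat_of_ord i) => [|j IH]; first exact: pser_over1.
by rewrite exprS; apply: pser_overM.
Qed.
End Subfield.

Lemma pser_over_sub (K : fieldType) (S T : {pred K}) s :
  {subset S <= T} -> pser_over S s -> pser_over T s.
Proof. by move=> ST Ss n; apply: ST. Qed.

Section PthRoots.
Variables (K : fieldType) (k : {pred K}) (hk : is_subfield k) (p : nat).
Hypothesis charp : p \in [pchar K].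

Definition proot E : {pred K} := [pred y | y ^+ (p ^ E)%N \in k].

Lemma proot_subfield E : is_subfield (proot E).
Proof.
have charq := pnat_pchar_exp E charp; split.
- by rewrite inE expr1n subfield1.
- by move=> x y; rewrite !inE => kx ky; rewrite exprDn_pchar // exprNn_pchar // subfieldB.
- by move=> x y; rewrite !inE => kx ky; rewrite exprMn subfieldM.
- by move=> x; rewrite !inE => kx; rewrite exprVn subfieldV.
Qed.

Lemma sub_proot E : {subset k <= proot E}.
Proof. by move=> x kx; rewrite inE subfieldX. Qed.

Lemma proot_monotone E e : {subset proot E <= proot (E + e)}.
Proof. by move=> y; rewrite !inE expnD exprM => /(subfieldX hk). Qed.

Lemma gen_field_proot (alpha : int -> K) E :
  (forall i, alpha i \in proot E) -> forall y, in_gen_field k alpha y -> y \in proot E.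
Proof. by move=> hE y; apply; [exact: proot_subfield | exact: sub_proot |]. Qed.
End PthRoots.

Section PolyUnXn.
Variables (R : nzRingType) (q : nat).
Hypothesis q_gt1 : (1 < q)%N.

Definition poly_unXn (P : {poly R}) : {poly R} := \poly_(i < size P) P`_(i * q).

Lemma poly_unXnK (P : {poly R}) : (forall j, ~~ (q %| j)%N -> P`_j = 0) -> poly_unXn P \Po 'X^q = P.
Proof.
move=> P0; apply/polyP => j; rewrite coef_comp_poly_Xn ?(ltnW q_gt1) //.
case: ifP => [dvd|/negbT/P0 -> //]; rewrite coef_poly; case: ifP => [_|]; first by rewrite divnK.
by move/negbT; rewrite -leqNgt => le; rewrite nth_default // (leq_trans le (leq_div j q)).
Qed.

Lemma size_poly_unXn (P : {poly R}) : (1 < size P)%N -> (size (poly_unXn P) < size P)%N.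
Proof.
move=> sP; apply: (@leq_ltn_trans (size P).-1); last by lia.
apply/leq_sizeP => j lej; rewrite coef_poly; case: ifP => // _.
apply: nth_default; have jq : (j * 2 <= j * q)%N by rewrite leq_mul2l q_gt1 orbT.
by move: sP lej jq; move: (size P) => n; lia.
Qed.
End PolyUnXn.

Section BoundedExponent.
Variables (K : fieldType) (k : {pred K}) (hk : is_subfield k) (p : nat).
Hypothesis charp : p \in [pchar K].

Let p_gt1 : (1 < p)%N := prime_gt1 (pcharf_prime charp).
Let p_gt0 : (0 < p)%N := prime_gt0 (pcharf_prime charp).

Definition pinsep_coefs (s : pser K) := forall n, exists E, pcoef s n \in proot k p E.
Definition bounded_exponent (s : pser K) := exists E, forall n, pcoef s n \in proot k p E.

Lemma prefix_exponent s : pinsep_coefs s ->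
  forall N, exists E, forall j, (j < N)%N -> pcoef s j \in proot k p E.
Proof.
move=> hs; elim=> [|N [E hE]]; first by exists 0%N.
have [e he] := hs N; exists (E + e)%N => j; rewrite ltnS leq_eqVlt => /orP[/eqP ->|ltjN].
  by rewrite addnC; apply: (proot_monotone hk).
exact: (proot_monotone hk) (hE j ltjN).
Qed.

Lemma pinsep_coefs_frob s : pinsep_coefs s -> pinsep_coefs (s ^+ p).
Proof.
move=> hs n; rewrite -[p in s ^+ p]expn1 pcoef_frob // expn1.
case: ifP => _; last by exists 0%N; exact: subfield0 (proot_subfield hk charp 0).
by have [E kE] := hs (n %/ p)%N; exists E; apply: (subfieldX (proot_subfield hk charp E)).
Qed.

Lemma bounded_exponent_frob s : bounded_exponent (s ^+ p) -> bounded_exponent s.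
Proof.
case=> E hE; exists E.+1 => n; have := hE (n * p)%N.
rewrite -[p in s ^+ p]expn1 pcoef_frob // expn1 dvdn_mull // (mulnK _ p_gt0) !inE.
by rewrite -exprM expnS.
Qed.

Lemma pser_natmul_eq0 (x : pser K) m : ~~ (p %| m)%N -> x *+ m = 0 -> x = 0.
Proof.
move=> ndvd xm0; apply: pser_ext => n.
have /eqP := congr1 (fun a : pser K => pcoef a n) xm0.
by rewrite pcoefMn pcoef0 -mulr_natr mulf_eq0 -(dvdn_pcharf charp) (negbTE ndvd) orbF => /eqP.
Qed.

Lemma deriv_eq0_coef (P : {poly pser K}) : P^`() = 0 -> forall j, ~~ (p %| j)%N -> P`_j = 0.
Proof.
move=> D0 [|j] ndvd; first by rewrite dvdn0 in ndvd.
by apply: (pser_natmul_eq0 ndvd); rewrite -coef_deriv D0 coef0.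
Qed.

(* Hensel step: if P'(s) has order v < N and s_0, ..., s_(N-1) lie in a
   subfield S containing the coefficients of P, then so does s_N, since the
   coefficient of x^(N+v) in P(s) = 0 is c + s_N P'(s)_v with c computed from
   the truncation of s. *)
Lemma hensel_step (S : {pred K}) (P : {poly pser K}) s v N :
  is_subfield S -> (forall i, pser_over S P`_i) -> P.[s] = 0 ->
  vanishes_below v P^`().[s] -> pcoef P^`().[s] v != 0 -> (v < N)%N ->
  (forall i, (i < N)%N -> pcoef s i \in S) -> pcoef s N \in S.
Proof.
move=> hS SP Ps0 d0 dv0 ltvN Ss.
pose t := PSer (fun i => if (i < N)%N then pcoef s i else 0).
pose h := s - t.
have St : pser_over S t by move=> i /=; case: ifP => [/Ss //|_]; exact: subfield0.
have h0 : vanishes_below N h by move=> i ltiN; rewrite pcoefB /= ltiN subrr.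
have hN : pcoef h N = pcoef s N by rewrite pcoefB /= ltnn subr0.
have s_th : s = t + h by rewrite addrC subrK.
have dt j : (j < N)%N -> pcoef P^`().[t] j = pcoef P^`().[s] j.
  by move=> ltjN; rewrite s_th (horner_perturb_low _ _ h0).
have dt0 : vanishes_below v P^`().[t] by move=> j ltjv; rewrite dt ?d0 // (ltn_trans ltjv).
have := horner_perturb_linear h0 dt0 ltvN; rewrite -s_th Ps0 pcoef0 hN dt //.
move=> /esym/eqP; rewrite addrC addr_eq0 => /eqP sN.
have -> : pcoef s N = - pcoef P.[t] (N + v)%N / pcoef P^`().[s] v by rewrite -sN mulfK.
apply: (subfieldM hS); first by apply: (subfieldN hS); exact: pser_over_horner.
apply: (subfieldV hS); rewrite -dt //; apply: pser_over_horner => // i.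
by rewrite coef_deriv; apply: pser_overMn.
Qed.

(* A root s of P with P'(s) <> 0: Hensel steps from the first v+1 coefficients. *)
Lemma simple_root_bounded (P : {poly pser K}) s :
  (forall i, pser_over k P`_i) -> P.[s] = 0 -> P^`().[s] != 0 ->
  pinsep_coefs s -> bounded_exponent s.
Proof.
move=> kP Ps0 D0 hs.
have /ex_minnP[v dv0 vmin] : exists v, pcoef P^`().[s] v != 0.
  have /boolp.existsNP[v /eqP] : ~ (forall n, pcoef P^`().[s] n = 0).
    by move=> all0; case/eqP: D0; apply: pser_ext.
  by exists v.
have d0 : vanishes_below v P^`().[s].
  by move=> j ltjv; apply/eqP; apply: contraTT ltjv => /vmin; rewrite -leqNgt.
have [E hE] := prefix_exponent hs v.+1.
exists E; suff all_N N n : (n < N)%N -> pcoef s n \in proot k p E by move=> n; exact: (all_N n.+1).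
elim: N n => [//|N IH] n; rewrite ltnS leq_eqVlt => /orP[/eqP ->|]; last exact: IH.
have [/hE //|ltvN] := ltnP N v.+1.
apply: hensel_step (proot_subfield hk charp E) _ Ps0 d0 dv0 ltvN IH.
by move=> i; apply: pser_over_sub (sub_proot hk p E) (kP i).
Qed.

Lemma root_bounded_exponent (P : {poly pser K}) s :
  P != 0 -> (forall i, pser_over k P`_i) -> P.[s] = 0 ->
  pinsep_coefs s -> bounded_exponent s.
Proof.
have [m szP] := ubnP (size P); elim: m => // m IH in P s szP *.
move=> P0 kP Ps0 hs.
have kP' i : pser_over k P^`()`_i by rewrite coef_deriv; apply: pser_overMn.
have [D0|D0] := eqVneq P^`() 0; last first.
  have [Ds0|Ds0] := eqVneq P^`().[s] 0; last exact: simple_root_bounded Ps0 Ds0 hs.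
  by apply: IH Ds0 hs => //; rewrite (leq_trans (lt_size_deriv P0)).
have szP1 : (1 < size P)%N.
  rewrite ltnNge; apply/negP => /size1_polyC Pc.
  by move: Ps0 P0; rewrite Pc hornerC => ->; rewrite eqxx.
have PR := poly_unXnK p_gt1 (deriv_eq0_coef D0).
have R0 : poly_unXn p P != 0 by apply: contra P0 => /eqP R0; rewrite -PR R0 comp_poly0.
apply: bounded_exponent_frob; apply: (IH (poly_unXn p P)) => //.
- by rewrite (leq_trans (size_poly_unXn p_gt1 szP1)).
- by move=> i; rewrite coef_poly; case: ifP => _; [apply: kP | move=> n; exact: subfield0].
- by rewrite -hornerXn -horner_comp PR.
- exact: pinsep_coefs_frob.
Qed.
End BoundedExponent.

Section Laurent.
Variable R : comNzRingType.
Implicit Types (c sigma : lser R) (cs : seq (lser R)).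

Lemma lcoef_ladd c c' i : lcoef (ladd c c') i = lcoef c i + lcoef c' i.
Proof.
rewrite {1}/lcoef /ladd /=; case: ifP => [lemi|].
  by rewrite gez0_abs ?subr_ge0 // (addrC (Num.min _ _)) subrK.
move/negbT; rewrite ge_min negb_or => /andP[/negbTE ci /negbTE c'i].
by rewrite /lcoef ci c'i addr0.
Qed.

Lemma lcoef_lzero i : lcoef (lzero R) i = 0.
Proof. by rewrite /lcoef; case: ifP. Qed.

Lemma lcoef_eval cs sigma i :
  lcoef (lpoly_eval cs sigma) i =
  \sum_(j < size cs) lcoef (lmul (nth (lzero R) cs j) (lexp sigma j)) i.
Proof.
have foldr_sum (l : seq (lser R)) : lcoef (foldr (@ladd R) (lzero R) l) i = \sum_(c <- l) lcoef c i.
  by elim: l => [|c l IH]; rewrite ?big_nil ?lcoef_lzero // big_cons /= lcoef_ladd IH.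
by rewrite /lpoly_eval foldr_sum big_map -(subn0 (size cs)) -/(index_iota 0 _) big_mkord subn0.
Qed.

Lemma lcoef_lmul c c' i :
  lcoef (lmul c c') i = lcoef (c.1 + c'.1, pcoef (PSer c.2 * PSer c'.2)) i.
Proof. by []. Qed.

Lemma pser_lexp sigma j : PSer (lexp sigma j).2 = PSer sigma.2 ^+ j.
Proof. by elim: j => [|j IH] //; rewrite exprS -IH. Qed.

Lemma lcoef_lmul1 c i : lcoef (lmul c (lone R)) i = lcoef c i.
Proof. by rewrite lcoef_lmul [PSer (lone R).2]/(1 : pser R) mulr1 addr0; case: c. Qed.

Lemma lcoef_lmul1l c i : lcoef (lmul (lone R) c) i = lcoef c i.
Proof. by rewrite lcoef_lmul [PSer (lone R).2]/(1 : pser R) mul1r add0r; case: c. Qed.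

Lemma lcoef_lmul0l c i : lcoef (lmul (lzero R) c) i = 0.
Proof. by rewrite lcoef_lmul [PSer (lzero R).2]/(0 : pser R) mul0r /lcoef; case: ifP. Qed.

Lemma lcoef_pair (e : int) (f : nat -> R) m : lcoef (e, f) (e + m%:Z) = f m.
Proof. by rewrite /lcoef /= lerDl (addrC e) addrK. Qed.

Lemma lcoef_shift (M : int) (l : nat) c n : M + c.1 = l%:Z ->
  lcoef c (n%:Z - M) = if (l <= n)%N then c.2 (n - l)%N else 0.
Proof.
case: c => e f /= Mel; have -> : e = l%:Z - M by rewrite -Mel addrC addKr.
rewrite /lcoef /= lerD2r lez_nat; case: ifP => // leln.
by rewrite opprB addrA subrK subzn.
Qed.

(* Multiplying an algebraic equation over k((x)) by a power x^M of x which
   makes every term a power series turns it into one over k[[x]]. *)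
Lemma pser_eval_shift cs sigma (M : int) (l : nat -> nat) :
  (forall j, (j < size cs)%N -> M + (lmul (nth (lzero R) cs j) (lexp sigma j)).1 = (l j)%:Z) ->
  forall n, pcoef (\poly_(j < size cs) (pmono (l j) 1 * PSer (nth (lzero R) cs j).2)).[PSer sigma.2] n
          = lcoef (lpoly_eval cs sigma) (n%:Z - M).
Proof.
move=> Ml n; rewrite horner_poly pcoef_sum lcoef_eval; apply: eq_bigr => j _.
by rewrite -mulrA -pser_lexp pcoef_shift (lcoef_shift _ (Ml j _)).
Qed.

Lemma lser_neq0_pser c : ~ lser_eq0 c -> PSer c.2 != 0.
Proof.
move=> c_neq0; apply/eqP => c0; apply: c_neq0 => i; rewrite /lcoef; case: ifP => // _.
exact: (congr1 (fun a : pser R => pcoef a _) c0).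
Qed.

Lemma pmono1_mul_eq0 (l : nat) (a : pser R) : pmono l 1 * a = 0 -> a = 0.
Proof.
move=> la0; apply: pser_ext => n; have := congr1 (fun b : pser R => pcoef b (l + n)%N) la0.
by rewrite pcoef_shift leq_addr addKn.
Qed.

Definition lneg c : lser R := (c.1, fun n => - c.2 n).
Definition lbinom c (q : nat) : seq (lser R) :=
  mkseq (fun j => if j == 0%N then lneg c else if j == q then lone R else lzero R) q.+1.

Lemma lcoef_lneg c i : lcoef (lneg c) i = - lcoef c i.
Proof. by rewrite /lcoef /=; case: ifP; rewrite ?oppr0. Qed.

Lemma nth_lbinom c q j :
  nth (lzero R) (lbinom c q) j = if j == 0%N then lneg c else if j == q then lone R else lzero R.
Proof.
have [ltjq|leqj] := ltnP j q.+1; first by rewrite nth_mkseq.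
by rewrite nth_default ?size_mkseq // (gtn_eqF leqj) (gtn_eqF (leq_ltn_trans (leq0n q) leqj)).
Qed.

Lemma lcoef_eval_binom c q sigma i : (0 < q)%N ->
  lcoef (lpoly_eval (lbinom c q) sigma) i = - lcoef c i + lcoef (lexp sigma q) i.
Proof.
move=> q_gt0; rewrite lcoef_eval size_mkseq.
rewrite (eq_bigr (fun j : 'I_q.+1 =>
  (if 0%N == j then - lcoef c i else 0) + (if q == j then lcoef (lexp sigma q) i else 0))).
  by rewrite big_split /= !(sum_ord_pred1 (fun _ => _)) ltnSn.
move=> j _; rewrite nth_lbinom ![_ == nat_of_ord j]eq_sym.
case: eqP => [->|_]; first by rewrite [0%N == q]eq_sym gtn_eqF // addr0 lcoef_lmul1 lcoef_lneg.
by case: eqP => [->|_]; rewrite ?lcoef_lmul1l ?lcoef_lmul0l add0r.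
Qed.
End Laurent.

Section LaurentOver.
Variables (K : fieldType) (k : {pred K}) (hk : is_subfield k).

Lemma pser_over_lser (c : lser K) : lser_over k c -> pser_over k (PSer c.2).
Proof. by case: c => e f kc n; rewrite /= -(lcoef_pair e f n). Qed.

Lemma pser_over_shift (l : nat) (a : pser K) : pser_over k a -> pser_over k (pmono l 1 * a).
Proof. by move=> ka n; rewrite pcoef_shift; case: ifP => _; [exact: ka | exact: subfield0]. Qed.

Lemma lser_root_pser (d : int) (f : nat -> K) : lser_algebraic k ((d, f) : lser K) ->
  exists P : {poly pser K}, [/\ P != 0, forall i, pser_over k P`_i & P.[PSer f] = 0].
Proof.
case=> cs [cs_k [j0 cs_j0] eval0]; set sigma := (d, f) : lser K.
pose T j := (lmul (nth (lzero K) cs j) (lexp sigma j)).1.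
pose M := (\sum_(j < size cs) `|T j|)%N.
pose l j := absz (M%:Z + T j).
have Ml j : (j < size cs)%N -> M%:Z + T j = (l j)%:Z.
  move=> ltj; rewrite /l gez0_abs // (@le_trans _ _ ((absz (T j))%:Z + T j)) //.
    by rewrite abszE -lerBlDr sub0r ler_normr lexx orbT.
  by rewrite lerD2r lez_nat /M (bigD1 (Ordinal ltj)) //= leq_addr.
exists (\poly_(j < size cs) (pmono (l j) 1 * PSer (nth (lzero K) cs j).2)); split.
- have ltj0 : (j0 < size cs)%N.
    by rewrite ltnNge; apply/negP => le; apply: cs_j0 => i; rewrite nth_default ?lcoef_lzero.
  apply/eqP => /(congr1 (fun P : {poly pser K} => P`_j0)); rewrite coef_poly ltj0 coef0.
  by move/pmono1_mul_eq0/eqP; apply/negP/lser_neq0_pser.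
- move=> i; rewrite coef_poly; case: ifP => _; last by move=> n; exact: subfield0.
  by apply/pser_over_shift/pser_over_lser.
- by apply: pser_ext => n; rewrite (pser_eval_shift Ml); exact: eval0.
Qed.

Variables (p : nat) (charp : p \in [pchar K]).

Lemma lser_over_frob (d : int) (f : nat -> K) E :
  (forall n, f n ^+ (p ^ E) \in k) -> lser_over k (lexp ((d, f) : lser K) (p ^ E)).
Proof.
move=> kf i; rewrite /lcoef; case: ifP => _; last exact: subfield0.
rewrite -[(lexp _ _).2 _]/(pcoef (PSer _) _) pser_lexp pcoef_frob //.
by case: ifP => _; [exact: kf | exact: subfield0].
Qed.

Lemma frob_lser_algebraic (d : int) (f : nat -> K) E :
  (forall n, f n ^+ (p ^ E) \in k) -> lser_algebraic k ((d, f) : lser K).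
Proof.
move=> kf; set sigma := (d, f) : lser K; set q := (p ^ E)%N.
have q_gt0 : (0 < q)%N by rewrite expn_gt0 prime_gt0 // (pcharf_prime charp).
have kc := lser_over_frob d kf.
exists (lbinom (lexp sigma q) q); split.
- move=> j i; rewrite nth_lbinom.
  case: eqP => _; first by rewrite lcoef_lneg (subfieldN hk) ?kc.
  case: eqP => _; last by rewrite lcoef_lzero subfield0.
  rewrite /lcoef; case: ifP => _ /=; last exact: subfield0.
  by case: eqP => _; [exact: subfield1 | exact: subfield0].
- exists q; rewrite nth_lbinom gtn_eqF // eqxx => /(_ 0).
  by rewrite /lcoef /= => /eqP; rewrite oner_eq0.
- by move=> i; rewrite lcoef_eval_binom // addNr.
Qed.
End LaurentOver.

Theorem theorem2p4 (K : closedFieldType) (k : {pred K}) (p : nat)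
  (hk : is_subfield k)
  (hp : p \in [pchar K])
  (hclos : forall x : K, algebraic_over k x)
  (d : int) (alpha : int -> K)
  (hd : forall i, i < d -> alpha i = 0)
  (hL : forall y, in_gen_field k alpha y ->
          exists n : nat, y ^+ (p ^ n) \in k) :
  lser_algebraic k ((d, fun n : nat => alpha (d + n%:Z)) : lser K) <->
  exists n : nat, forall y, in_gen_field k alpha y -> y ^+ (p ^ n) \in k.
Proof.
have gen_alpha i : in_gen_field k alpha (alpha i) by move=> S _ _; apply.
split=> [|[E kE]]; last by apply: (frob_lser_algebraic hk hp) => n; exact/kE/gen_alpha.
case/(lser_root_pser hk) => P [P0 kP Ps0].
have [E kE] : bounded_exponent k p (PSer (fun n => alpha (d + n%:Z))).
  by apply: (root_bounded_exponent hk hp P0 kP Ps0) => n; exact: hL (gen_alpha _).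
exists E => y; apply: (gen_field_proot hk hp (alpha := alpha)) => i.
have [/hd ->|ledi] := ltP i d; first exact: subfield0 (proot_subfield hk hp E).
(* alpha_i = s_(i-d) for i >= d *)
by have := kE `|i - d|%N; rewrite /= gez0_abs ?subr_ge0 // addrCA subrr addr0.
Qed.
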